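(* Fix an integer $k\ge3$. Let $\beta\in\mathbb C$ satisfy $\beta^{k+1}=\big(1-(\tfrac12)^{1/k}e^{\pi i/k}\big)^{-1}$, let $\alpha=-\beta^{-k}$, and let $p(z)=\frac{(z-\alpha)(z+\beta)^k-1}{z}$ (a polynomial of degree $k$). Then there is $N\in\mathbb N$ such that for every integer $n>N$ and every solution $w\in\mathbb D$ of the equation $$z^2p'(z)=\frac{n+2}{n+1},$$ setting $\lambda=\frac1w+p(w)$, the polynomial $1+z[p(z)-\lambda]$ has at least two zeros (counted with multiplicity) in the open unit disk $\mathbb D$.
   Context: $\mathbb D$ denotes the open unit disk in $\mathbb C$. *)

From HB Require Import structures.
From mathcomp Require Import all_boot all_order all_algebra.
From mathcomp Require Import all_classical all_reals all_analysis.
From mathcomp Require Import complex.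
Set Implicit Arguments. Unset Strict Implicit. Unset Printing Implicit Defensive.
Import Order.TTheory GRing.Theory Num.Theory.
Local Open Scope ring_scope.

Definition ck (R : realType) (k : nat) : R[i] :=
  let r := powR (2^-1 : R) (k%:R^-1) in
  Complex (r * cos (pi / k%:R)) (r * sin (pi / k%:R)).

Definition alpha_of (R : realType) (k : nat) (beta : R[i]) : R[i] :=
  - (beta ^- k).

(* p(z) = ((z - alpha)(z + beta)^k - 1) / z, as a polynomial
   (the division is exact since the constant term vanishes). *)
Definition p_poly (R : realType) (k : nat) (beta : R[i]) : {poly R[i]} :=
  (('X - (alpha_of k beta)%:P) * ('X + beta%:P) ^+ k - 1) %/ 'X.

(* The polynomial q has at least two zeros in the open unit disk, counted
   with multiplicity: there are a, b in D (possibly equal) such that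
   (X - a)(X - b) divides q. *)
Definition two_zeros_in_disk (R : realType) (q : {poly R[i]}) : Prop :=
  exists a b : R[i], `|a| < 1 /\ `|b| < 1 /\
    (('X - a%:P) * ('X - b%:P) %| q)%R.

From HB Require Import structures.
From mathcomp Require Import all_boot all_order all_algebra.
From mathcomp Require Import all_classical all_reals all_analysis.
From mathcomp Require Import complex.
From mathcomp Require Import ring lra.
Set Implicit Arguments. Unset Strict Implicit. Unset Printing Implicit Defensive.
Import Order.TTheory GRing.Theory Num.Theory Normc.
Local Open Scope ring_scope.

(* Write h = (X - alpha)(X + beta)^k, so that X p = h - 1 and
   G := X^2 p' - 1 = X h' - h = (X + beta)^(k-1) (k X^2 - (k-1) alpha X + alpha beta)
   (this is crit_poly alpha beta (k-1)), with G(0) = alpha beta^k = -1.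
   Since cos(pi/k) >= 1/2 for k >= 3, |1 - c_k| < 1, hence |beta| > 1 and
   |alpha| = |beta|^-k < 1.  This makes G bounded below on an annulus rho <= |z| <= 1,
   so a solution w in the disk of G(w) = 1/(n+1) satisfies |w| < rho for n large;
   since G(0) = -1 and G is Lipschitz on the disk, 1/((n+1)|w|) is then also small.
   Now q = 1 + X (p - lambda) = h - lambda X is monic of degree k+1 with q(w) = 0 and
   w q'(w) = G(w), so q = r (X - w) with r monic of degree k and
   |r(w)| = 1/((n+1)|w|) < (1 - rho)^k: some root of r lies within 1 - rho of w,
   hence in the disk. *)

Definition crit_poly (F : nzRingType) (a c : F) (k : nat) : {poly F} :=
  ('X + c%:P) ^+ k * (k.+1%:R *: 'X^2 - (k%:R * a) *: 'X + (a * c)%:P).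

Section PolyIdentities.
Variable F : comNzRingType.

Lemma crit_polyE (a c : F) k :
  crit_poly a c k = 'X * (('X - a%:P) * ('X + c%:P) ^+ k.+1)^`()
                    - ('X - a%:P) * ('X + c%:P) ^+ k.+1.
Proof.
rewrite derivM derivXsubC mul1r deriv_exp derivD derivX derivC addr0 mul1r /=.
by rewrite /crit_poly -!mul_polyC polyCM !polyC_natr [_ ^+ k.+1]exprS; ring.
Qed.

Lemma crit_poly_horner0 (a c : F) k : (crit_poly a c k).[0] = a * c ^+ k.+1.
Proof.
rewrite /crit_poly.
rewrite !(hornerM, horner_exp, hornerD, hornerN, hornerZ, hornerXn, hornerX, hornerC).
by rewrite add0r exprS; ring.
Qed.

Lemma sqrX_deriv_sub1 (p h : {poly F}) :
  'X * p = h - 1 -> 'X ^+ 2 * p^`() - 1 = 'X * h^`() - h.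
Proof.
move=> Xp; have := congr1 deriv Xp; rewrite derivM derivX mul1r derivB derivC subr0.
by move=> <-; rewrite mulrDr Xp; ring.
Qed.

Lemma add1_mulX_subC (p h : {poly F}) (c : F) :
  'X * p = h - 1 -> 1 + 'X * (p - c%:P) = h - c *: 'X.
Proof. by move=> Xp; rewrite mulrBr Xp -mul_polyC mulrC; ring. Qed.

Lemma size_oppZX_lt (h : {poly F}) (c : F) :
  (2 < size h)%N -> (size (- (c *: 'X)) < size h)%N.
Proof.
by move=> hsize; rewrite size_polyN (leq_ltn_trans (size_scale_leq _ _)) ?size_polyX.
Qed.

Lemma size_subZX (h : {poly F}) (c : F) : (2 < size h)%N -> size (h - c *: 'X) = size h.
Proof. by move=> /(size_oppZX_lt c) /size_polyDl. Qed.

Lemma monic_subZX (h : {poly F}) (c : F) :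
  h \is monic -> (2 < size h)%N -> h - c *: 'X \is monic.
Proof. by move=> hmon /(size_oppZX_lt c) hlt; rewrite monicE lead_coefDl ?hmon. Qed.

End PolyIdentities.

Lemma root_add1_mulX_subC (F : fieldType) (p : {poly F}) (w : F) :
  w != 0 -> let q := 1 + 'X * (p - (w^-1 + p.[w])%:P) in
  root q w /\ w * q^`().[w] = w ^+ 2 * p^`().[w] - 1.
Proof.
move=> w0 q; split.
  by rewrite /root /q !hornerE mulrBr mulrDr mulfV //; apply/eqP; ring.
rewrite /q derivD derivC add0r derivM derivX mul1r derivB derivC subr0 !hornerE.
by rewrite mulrDr mulrBr mulrDr mulfV //; ring.
Qed.

Lemma natr_succ_div_sub1 (F : numFieldType) (n : nat) :
  n.+2%:R / n.+1%:R - 1 = n.+1%:R^-1 :> F.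
Proof. by rewrite -natr1 mulrDl divff ?pnatr_eq0 // div1r addrAC subrr add0r. Qed.

Lemma norm_horner_sub_horner0 (R : numDomainType) (p : {poly R}) (z : R) :
  `|z| <= 1 -> `|p.[z] - p.[0]| <= `|z| * \sum_(i < size p) `|p`_i|.
Proof.
move=> z1; rewrite !horner_coef -sumrB mulr_sumr.
apply: le_trans (ler_norm_sum _ _ _) _; apply: ler_sum => -[[|i] _] _ /=.
  by rewrite !expr0 subrr normr0 mulr_ge0.
rewrite expr0n /= mulr0 subr0 normrM mulrC ler_wpM2r // normrX exprS.
by rewrite ler_piMr // exprn_ile1.
Qed.

Section ClosedFieldRoots.
Variable C : numClosedFieldType.

Lemma root_near_of_norm_horner_lt (r : {poly C}) (w d : C) :
  r \is monic -> 0 <= d -> `|r.[w]| < d ^+ (size r).-1 ->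
  exists2 z, root r z & `|w - z| < d.
Proof.
move=> rmon d0; have [zs rE] := closed_field_poly_normal r.
rewrite (monicP rmon) scale1r in rE.
have [/hasP[z zs_z near] _ | /hasPn far] := boolP (has (fun z => `|w - z| < d) zs).
  by exists z; rewrite // rE root_prod_XsubC.
rewrite rE horner_prod normr_prod size_prod_XsubC /= => small.
suff: d ^+ size zs <= \prod_(z <- zs) `|('X - z%:P).[w]|.
  by move=> /(lt_le_trans small); rewrite ltxx.
rewrite -[d ^+ _]mulr1 -iter_mulr -count_predT -big_const_seq.
rewrite big_seq [X in _ <= X]big_seq; apply: ler_prod => z /far.
by rewrite d0 hornerXsubC /= real_leNgt ?ger0_real.
Qed.

Lemma two_roots_in_disk_of_small_deriv (q : {poly C}) (w d : C) :
  q \is monic -> root q w -> 0 < d -> `|w| + d <= 1 ->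
  `|q^`().[w]| < d ^+ (size q).-2 ->
  exists a b : C, `|a| < 1 /\ `|b| < 1 /\ ('X - a%:P) * ('X - b%:P) %| q.
Proof.
move=> qmon qw d0 wd small.
have qE : q = q %/ ('X - w%:P) * ('X - w%:P) by rewrite divpK // dvdp_XsubCl.
set r := q %/ _ in qE.
have rmon : r \is monic by rewrite -(monicMr _ (monicXsubC w)) -qE.
have q'w : q^`().[w] = r.[w].
  by rewrite qE derivM derivXsubC mulr1 !hornerE subrr mulr0 add0r.
have size_r : (size q).-2 = (size r).-1.
  by rewrite qE size_Mmonic ?monicXsubC ?monic_neq0 // size_XsubC addn2.
rewrite q'w size_r in small.
have [z rz wz] := root_near_of_norm_horner_lt rmon (ltW d0) small.
exists w, z; split; last split.
- by apply: lt_le_trans wd; rewrite ltrDl.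
- rewrite -[z](subKr w); apply: le_lt_trans (ler_normB _ _) _.
  by apply: lt_le_trans wd; rewrite ltrD2l.
- by rewrite qE mulrC dvdp_mul2r ?monic_neq0 ?monicXsubC // dvdp_XsubCl.
Qed.

End ClosedFieldRoots.

Lemma quadratic_lower_bound_near1 (R : realFieldType) (K u v : R) :
  0 <= u -> 0 <= v -> u + v < K ->
  exists2 rho, rho < 1 &
    exists2 m, 0 < m & forall x, rho <= x <= 1 -> m <= K * x ^+ 2 - u * x - v.
Proof.
move=> u0 v0 uvK; have K0 : 0 < K by lra.
set s := (u + v) / K.
have s0 : 0 <= s by rewrite divr_ge0 //; lra.
have s1 : s < 1 by rewrite ltr_pdivrMr //; lra.
have sK : s * K = u + v by rewrite divfK ?gt_eqF.
exists ((1 + s) / 2); first lra.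
exists (K * ((1 - s) / 2) ^+ 2); first by rewrite mulr_gt0 // exprn_gt0 //; lra.
move=> x /andP[rx x1].
have : ((1 + s) / 2) ^+ 2 <= x ^+ 2 by rewrite lerXn2r // ?nnegrE; lra.
nra.
Qed.

Lemma natr_inv_lt (R : archiRealFieldType) (T : R) (n : nat) :
  0 < T -> (Num.truncn T^-1 < n)%N -> n%:R^-1 < T.
Proof.
move=> T0 Nn; rewrite -[T]invrK ltf_pV2 ?posrE ?invr_gt0 //; last first.
  by rewrite ltr0n (leq_ltn_trans _ Nn).
by apply: lt_le_trans (truncnS_gt _) _; rewrite ler_nat.
Qed.

Section ComplexNorm.
Variable R : rcfType.
Implicit Types (x y z : R[i]).

Lemma normr_normc z : `|z| = (normc z)%:C%C.
Proof. by case: z. Qed.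

Lemma normc_ge0 z : 0 <= normc z.
Proof. by rewrite -ler0c -normr_normc. Qed.

Lemma normc_gt0 z : (0 < normc z) = (z != 0).
Proof. by rewrite -normr_gt0 normr_normc ltcE /= eqxx. Qed.

Lemma normcX z n : normc (z ^+ n) = normc z ^+ n.
Proof. by apply: complexI; rewrite rmorphXn -!normr_normc normrX. Qed.

Lemma normc_natr n : normc (n%:R : R[i]) = n%:R.
Proof. by apply: complexI; rewrite rmorph_nat -normr_normc normr_nat. Qed.

Lemma lerB_normcD x y : normc x - normc y <= normc (x + y).
Proof. by have := lerB_normD x y; rewrite !normr_normc -rmorphB lecR. Qed.

Lemma normc_horner_sub_horner0 (p : {poly R[i]}) z : normc z <= 1 ->
  normc (p.[z] - p.[0]) <= normc z * \sum_(i < size p) normc p`_i.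
Proof.
move=> z1; have /(_ p) := @norm_horner_sub_horner0 _ _ z.
rewrite normr_normc lecR => /(_ z1).
rewrite -(eq_bigr _ (fun i _ => normr_normc _)) -rmorph_sum -rmorphM.
by rewrite normr_normc lecR.
Qed.

Lemma normc_gt1_of_exprS_eq_inv x z (n : nat) :
  z != 0 -> normc z < 1 -> x ^+ n.+1 = z^-1 -> 1 < normc x.
Proof.
move=> z0 z1 /(congr1 (@normc R)); rewrite normcX normcV => xz.
rewrite ltNge; apply/negP => /(exprn_ile1 n.+1 (normc_ge0 x)).
by rewrite xz invf_le1 ?normc_gt0 // leNgt z1.
Qed.

Lemma small_value_bounds (G : {poly R[i]}) (rho m D : R) :
  normc G.[0] = 1 -> 0 < m -> 0 < D ->
  (forall w, rho <= normc w <= 1 -> m <= normc G.[w]) ->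
  exists2 T, 0 < T & forall w, normc w < 1 -> normc G.[w] < T ->
    normc w < rho /\ normc G.[w] < D * normc w.
Proof.
move=> G0 m0 D0 far; set M := \sum_(i < size G) normc G`_i.
have M0 : 0 <= M by rewrite sumr_ge0 // => i _; apply: normc_ge0.
(* Below D / (M + D), the Lipschitz bound 1 - normc G.[w] <= M normc w gives the claim. *)
exists (Num.min m (D / (M + D))) => [|w w1].
  by rewrite lt_min m0 divr_gt0 //; lra.
rewrite lt_min ltr_pdivlMr; last by lra.
set e := normc G.[w]; set x := normc w => /andP[em eMD].
split.
  rewrite ltNge; apply/negP => rw.
  by have := far w; rewrite -/e rw (ltW w1) => /(_ isT); lra.
have lip : 1 - e <= x * M.
  have := lerB_normcD G.[0] (- G.[w]); rewrite normcN G0 -/e -normcN opprB.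
  by have := normc_horner_sub_horner0 G (ltW w1); rewrite -/x -/M; lra.
by have := normc_ge0 w; have := normc_ge0 G.[w]; rewrite -/e -/x; nra.
Qed.

Lemma normc_crit_poly_lower_bound (a c : R[i]) (k : nat) :
  (0 < k)%N -> 1 < normc c -> normc a * normc c ^+ k.+1 = 1 ->
  exists2 rho, rho < 1 & exists2 m, 0 < m &
    forall w, rho <= normc w <= 1 -> m <= normc (crit_poly a c k).[w].
Proof.
move=> k0 c1 ac1; set b := normc c in c1 ac1 *; set A := normc a in ac1 *.
have A0 : 0 <= A := normc_ge0 a.
have bk1 : 1 < b ^+ k by rewrite exprn_egt1 // -lt0n.
have Ab1 : A * b < 1 by move: ac1; rewrite exprS mulrA; nra.
have A1 : A < 1 by nra.
have k0R : (0 : R) <= k%:R := ler0n _ k.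
have coefs : k%:R * A + A * b < k.+1%:R by rewrite -natr1; nra.
have [rho rho1 [m m0 gap]] := quadratic_lower_bound_near1 (mulr_ge0 k0R A0)
  (mulr_ge0 A0 (ltW (lt_trans ltr01 c1))) coefs.
exists rho => //; exists ((b - 1) ^+ k * m).
  by rewrite mulr_gt0 // exprn_gt0 // subr_gt0.
move=> w rw1; have /andP[_ w1] := rw1; rewrite /crit_poly !hornerE normcM normcX.
apply: ler_pM; rewrite ?exprn_ge0 ?subr_ge0 ?(ltW c1) ?(ltW m0) //.
  rewrite lerXn2r ?nnegrE ?subr_ge0 ?(ltW c1) ?normc_ge0 // [w + c]addrC.
  by have := lerB_normcD c w; rewrite -/b; lra.
apply: le_trans (gap _ rw1) _.
have := lerB_normcD (k.+1%:R * w * w - k%:R * a * w) (a * c).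
have := lerB_normcD (k.+1%:R * w * w) (- (k%:R * a * w)).
by rewrite normcN !normcM !normc_natr -/A -/b expr2; lra.
Qed.

Lemma crit_poly_small_value_bounds (a c : R[i]) (k : nat) :
  (0 < k)%N -> 1 < normc c -> a * c ^+ k.+1 = -1 ->
  exists2 rho, rho < 1 & exists2 T, 0 < T & forall w, normc w < 1 ->
    normc (crit_poly a c k).[w] < T ->
    normc w < rho /\ normc (crit_poly a c k).[w] < (1 - rho) ^+ k.+1 * normc w.
Proof.
move=> k0 c1 ac.
have ac1 : normc a * normc c ^+ k.+1 = 1 by rewrite -normcX -normcM ac normcN normc1.
have [rho rho1 [m m0 far]] := normc_crit_poly_lower_bound k0 c1 ac1.
have G0 : normc (crit_poly a c k).[0] = 1 by rewrite crit_poly_horner0 ac normcN normc1.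
by exists rho => //; apply: small_value_bounds G0 m0 _ far; rewrite exprn_gt0 ?subr_gt0.
Qed.

End ComplexNorm.

Lemma two_zeros_in_disk_of_small_deriv (R : realType) (q : {poly R[i]}) (w : R[i])
  (d : R) :
  q \is monic -> root q w -> 0 < d -> normc w + d <= 1 ->
  normc q^`().[w] < d ^+ (size q).-2 -> two_zeros_in_disk q.
Proof.
move=> qmon qw d0 wd q'w.
apply: (two_roots_in_disk_of_small_deriv (w := w) (d := d%:C%C)) => //.
- by rewrite ltcE /= eqxx.
- by rewrite normr_normc -rmorphD lecR.
- by rewrite normr_normc -rmorphXn ltcR.
Qed.

Lemma cos_pi_div3 (R : realType) : cos (pi / 3%:R) = 2^-1 :> R.
Proof.
set t := pi / 3%:R.
have t0 : 0 < t < pi / 2 by rewrite /t; have := pi_gt0 R; lra.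
have c0 : 0 < cos t by apply: cos_gt0_pihalf; lra.
have : cos (t *+ 2) = cos (pi - t) by congr cos; rewrite /t; field.
by rewrite cos_mulr2n cosB cospi sinpi mul0r addr0; nra.
Qed.

Lemma cos_pi_div_ge (R : realType) (k : nat) :
  (3 <= k)%N -> 2^-1 <= cos (pi / k%:R) :> R.
Proof.
move=> k3; have pi0 := pi_gt0 R; have k3R : 3%:R <= k%:R :> R by rewrite ler_nat.
have kpi : pi / k%:R <= pi / 3%:R :> R.
  by rewrite ler_pdivrMr; [rewrite mulrAC ler_pdivlMr; nra | lra].
have kpi0 : 0 <= pi / k%:R :> R by rewrite divr_ge0 //; lra.
by rewrite -(cos_pi_div3 R) leNgt ltr_cos -?leNgt // in_itv /= ?kpi0; lra.
Qed.

Lemma ck_radius (R : realType) (k : nat) :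
  (0 < k)%N -> 0 < (2^-1 : R) `^ k%:R^-1 < 1.
Proof.
move=> k0; have kR : (0 : R) < k%:R by rewrite ltr0n.
rewrite powR_gt0 //=; have := @gt0_ltr_powR R k%:R^-1 _ 2^-1 1.
by rewrite powR1; apply; rewrite ?nnegrE ?invr_ge0 ?invr_gt0 ?invf_lt1 ?ltr1n.
Qed.

Lemma ck_neq1 (R : realType) (k : nat) : (0 < k)%N -> ck R k != 1.
Proof.
move=> /(ck_radius R) /andP[r0 r1]; apply/eqP => /(congr1 (@complex.Re R)) /=.
by have := @cos_le1 R (pi / k%:R); nra.
Qed.

Lemma normc_1Bck_lt1 (R : realType) (k : nat) :
  (3 <= k)%N -> normc (1 - ck R k) < 1.
Proof.
move=> k3; have /andP[r0 r1] := ck_radius R (ltnW (ltnW k3)).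
have c2 := cos_pi_div_ge R k3; have cs := cos2Dsin2 (pi / k%:R :> R).
rewrite /ck /= -[ltRHS]sqrtr1 ltr_sqrt ?ltr01 //.
by move: r0 r1 c2 cs; set r := _ `^ _; set c := cos _; set s := sin _; nra.
Qed.

Section PPoly.
Variables (R : realType) (k : nat) (beta : R[i]).
Hypothesis beta0 : beta != 0.
Local Notation h := (('X - (alpha_of k beta)%:P) * ('X + beta%:P) ^+ k).

Lemma alpha_mul_exp : alpha_of k beta * beta ^+ k = -1.
Proof. by rewrite /alpha_of mulNr mulVf ?expf_neq0. Qed.

Lemma mulX_p_poly : 'X * p_poly k beta = h - 1.
Proof.
have : 'X %| h - 1.
  have := dvdp_XsubCl (h - 1) 0; rewrite polyC0 subr0 => ->.
  by rewrite /root !hornerE mulNr alpha_mul_exp opprK subrr.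
by move=> /divpK; rewrite mulrC.
Qed.

Lemma add1_mulX_p_poly_subC c : (0 < k)%N ->
  let q := 1 + 'X * (p_poly k beta - c%:P) in q \is monic /\ size q = k.+2.
Proof.
move=> k0 q; have hmon : h \is monic.
  by rewrite monicMl ?monic_exp ?monicXsubC ?monicXaddC.
have hsize : size h = k.+2.
  rewrite size_monicM ?monicXsubC ?monic_neq0 ?monic_exp ?monicXaddC // size_XsubC.
  by rewrite -[beta]opprK polyCN size_exp_XsubC.
by rewrite /q (add1_mulX_subC _ mulX_p_poly) size_subZX ?monic_subZX // hsize.
Qed.

End PPoly.

Lemma sqrX_deriv_p_poly (R : realType) (k : nat) (beta : R[i]) : beta != 0 ->
  'X ^+ 2 * (p_poly k.+1 beta)^`() - 1 = crit_poly (alpha_of k.+1 beta) beta k.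
Proof.
by move=> beta0; rewrite (sqrX_deriv_sub1 (mulX_p_poly k.+1 beta0)) crit_polyE.
Qed.

Theorem lemma4p4 (R : realType) (k : nat) (hk : (3 <= k)%N) (beta : R[i])
  (hbeta : beta ^+ k.+1 = (1 - ck R k)^-1) :
  exists N : nat, forall n : nat, (N < n)%N ->
    forall w : R[i], `|w| < 1 ->
      w ^+ 2 * (p_poly k beta)^`().[w] = (n + 2)%:R / (n + 1)%:R ->
      let lambda := w^-1 + (p_poly k beta).[w] in
      two_zeros_in_disk (1 + 'X * (p_poly k beta - lambda%:P)).
Proof.
case: k hk hbeta => [//|k] hk hbeta.
have b1 : 1 < normc beta.
  apply: normc_gt1_of_exprS_eq_inv hbeta; last exact: normc_1Bck_lt1.
  by rewrite subr_eq0 eq_sym ck_neq1.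
have beta0 : beta != 0 by rewrite -normc_gt0 (lt_trans ltr01 b1).
have [rho rho1 [T T0 small]] :=
  crit_poly_small_value_bounds (ltnW hk) b1 (alpha_mul_exp k.+1 beta0).
exists (Num.truncn T^-1) => n Nn w w1; rewrite addn2 addn1 => hw lambda.
set G := crit_poly _ _ _ in small.
have Gw : G.[w] = w ^+ 2 * (p_poly k.+1 beta)^`().[w] - 1.
  by rewrite /G -sqrX_deriv_p_poly // !hornerE.
have nGw : normc G.[w] = n.+1%:R^-1.
  by rewrite Gw hw natr_succ_div_sub1 normcV normc_natr.
have GT : normc G.[w] < T by rewrite nGw natr_inv_lt // ltnS ltnW.
have [|wrho Gsmall] := small w _ GT; first by move: w1; rewrite normr_normc ltcR.
have w0 : w != 0.
  by apply: contraTneq Gsmall => ->; rewrite normc0 mulr0 ltNge normc_ge0.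
have [qw wq'] := root_add1_mulX_subC (p_poly k.+1 beta) w0.
have [qmon qsize] := add1_mulX_p_poly_subC beta0 lambda (ltn0Sn k).
apply: (two_zeros_in_disk_of_small_deriv (d := 1 - rho) qmon qw).
- by rewrite subr_gt0.
- lra.
- by rewrite qsize -(ltr_pM2r (x := normc w)) ?normc_gt0 // mulrC -normcM wq' -Gw.
Qed.
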